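(* Let $S$ be a one-dimensional tiling substitution with expansion constant $\beta>1$ and with $\vec h\in(r\mathbb{Q}(\beta))^m$ for some $r>0$, and suppose $\beta$ is a Pisot number. Let $T$ be a central tile whose endpoints belong to $\mathbb{Q}(\beta)$. Then there exist $K,L\in\mathbb N$ such that $\bar S^{NL+K}(T)=\bar S^{K}(T)$ for all $N>0$.
   Context: A Pisot number is an algebraic integer $\beta>1$ all of whose Galois conjugates $\beta'\ne\beta$ satisfy $|\beta'|<1$. A one-dimensional tiling substitution is built as follows: $\sigma:\mathcal A\to\mathcal A^*$ is a substitution on $\mathcal A=\{1,\dots,m\}$ (with $\mathcal A^*$ the nonempty finite words), its structure matrix $M$ ($M_{i,j}$ = number of occurrences of $j$ in $\sigma(i)$) has real eigenvalue $\beta>1$ with right eigenvector $\vec h=(h_1,\dots,h_m)$ having strictly positive entries. Prototiles are $P_j=[0,h_j)$ with label $j$; a tile is a labeled translate $P_j+s=[s,s+h_j)$. For a word $\mathbf w=j_1\cdots j_n$, $\pi(s,\mathbf w)=(P_{j_1}+s_1,\dots,P_{j_n}+s_n)$ with $s_1=s$, $s_{i+1}=s_i+h_{j_i}$; the substitution is $S(P_j+s)=\pi(\beta s,\sigma(j))$. A central tile is a tile $[s,t)$ with $s\le0<t$, and $\bar S(T)$ is the unique tile of $S(T)$ containing $0$. Equality of tiles means equal intervals with equal labels. *)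

From HB Require Import structures.
From mathcomp Require Import all_boot all_order all_algebra.
From mathcomp Require Import reals complex.
Set Implicit Arguments. Unset Strict Implicit. Unset Printing Implicit Defensive.
Import Order.TTheory GRing.Theory Num.Theory.
Local Open Scope ring_scope.

Section Tiling.
Variable R : realType.

Definition inQb (beta x : R) : Prop :=
  exists p q : {poly rat},
    (map_poly ratr q).[beta] != 0 /\
    x = (map_poly ratr p).[beta] / (map_poly ratr q).[beta].

(* Galois conjugates of an algebraic number beta: the complex roots of
   its minimal polynomial over Q.  An algebraic integer has a monic
   integer minimal polynomial. *)
Definition is_min_int_poly (beta : R) (p : {poly int}) : Prop :=
  p \is monic /\ root (map_poly intr p) beta /\
  irreducible_poly (map_poly intr p : {poly rat}).

Definition pisot (beta : R) : Prop :=
  1 < beta /\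
  exists p : {poly int}, is_min_int_poly beta p /\
    forall z : R[i], root (map_poly intr p) z -> z != (beta%:C)%C -> `|z| < 1.

Variable m : nat.

Definition struct_mx (sigma : 'I_m -> seq 'I_m) : 'M[R]_m :=
  \matrix_(i, j) (count_mem j (sigma i))%:R.

Definition tiling_subst (sigma : 'I_m -> seq 'I_m) (beta : R) (h : 'cV[R]_m)
  : Prop :=
  (forall i, 0 < size (sigma i))%N /\ 1 < beta /\
  struct_mx sigma *m h = beta *: h /\ (forall j, 0 < h j 0).

(* a tile P_j + s = [s, s + h_j) with label j is encoded by the pair (j, s);
   two tiles are equal (same interval, same label) iff the pairs are equal *)
Definition tile := ('I_m * R)%type.

Definition tile_left (T : tile) : R := T.2.
Definition tile_right (h : 'cV[R]_m) (T : tile) : R := T.2 + h T.1 0.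

Fixpoint pi_tiles (h : 'cV[R]_m) (s : R) (w : seq 'I_m) : seq tile :=
  match w with
  | [::] => [::]
  | j :: w' => (j, s) :: pi_tiles h (s + h j 0) w'
  end.

Definition subst_tile (sigma : 'I_m -> seq 'I_m) (beta : R) (h : 'cV[R]_m)
  (T : tile) : seq tile := pi_tiles h (beta * T.2) (sigma T.1).

Definition contains0 (h : 'cV[R]_m) (T : tile) : bool :=
  (tile_left T <= 0) && (0 < tile_right h T).

Definition central (h : 'cV[R]_m) (T : tile) : Prop := contains0 h T.

(* Sbar(T): the (unique, for central T) tile of S(T) containing 0
   (T itself is returned as an irrelevant default if there is none). *)
Definition Sbar (sigma : 'I_m -> seq 'I_m) (beta : R) (h : 'cV[R]_m)
  (T : tile) : tile :=
  nth T (subst_tile sigma beta h T)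
    (find (contains0 h) (subst_tile sigma beta h T)).

End Tiling.

From HB Require Import structures.
From mathcomp Require Import all_boot all_order all_algebra all_field.
From mathcomp Require Import reals complex polyorder ring lra zify.
Set Implicit Arguments. Unset Strict Implicit. Unset Printing Implicit Defensive.
Import Order.TTheory GRing.Theory Num.Theory.
Local Open Scope ring_scope.
Local Open Scope complex_scope.

(* The left endpoints of the iterates of [Sbar] satisfy x' = beta x + (a partial sum
   of tile lengths).  After clearing denominators in Q(beta), E x = g(beta) for a fixed
   E != 0 and an integer polynomial g taken modulo the minimal polynomial p of beta,
   and one step replaces g by g X + w with w from a finite set of digits.  At beta
   itself g(beta) stays bounded because the tiles are central; at every other
   conjugate z the map a |-> a z + w contracts since |z| < 1, so g(z) stays bounded as
   well.  Bounded values at the deg p distinct conjugates bound the integer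
   coefficients of g (Lagrange interpolation), hence the orbit of T is finite and
   eventually periodic. *)

Lemma iter_eventually_periodic (T : eqType) (f : T -> T) (x : T) (s : seq T) :
  (forall n, iter n f x \in s) ->
  exists K L : nat, (0 < L)%N /\ forall N, iter (N * L + K) f x = iter K f x.
Proof.
move=> orbit_s; pose t := [seq iter n f x | n <- iota 0 (size s).+1].
have /(uniqPn x) [i [j [lt_ij lt_j]]] : ~~ uniq t.
  apply/negP => /uniq_leq_size le_ts.
  have : (size t <= size s)%N by apply: le_ts => _ /mapP[n _ ->].
  by rewrite size_map size_iota ltnn.
rewrite size_map size_iota in lt_j.
have lt_i := ltn_trans lt_ij lt_j.
rewrite !(nth_map 0%N) ?size_iota // !nth_iota // !add0n => iter_ij.
exists i, (j - i)%N; split; first by rewrite subn_gt0.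
elim=> [|N IH]; first by rewrite mul0n add0n.
by rewrite mulSn -addnA iterD IH -iterD (subnK (ltnW lt_ij)) -iter_ij.
Qed.

Section LagrangeInterpolation.
Variable F : fieldType.

Definition lagrange_poly (rs : seq F) (z : F) : {poly F} :=
  (\prod_(y <- rs | y != z) (z - y))^-1 *: \prod_(y <- rs | y != z) ('X - y%:P).

Lemma lagrange_poly_sample (rs : seq F) (z y : F) : y \in rs ->
  (lagrange_poly rs z).[y] = (y == z)%:R.
Proof.
move=> yr; rewrite hornerZ horner_prod.
rewrite [X in _ * X](eq_bigr (fun x => y - x)) => [|x _]; last exact: hornerXsubC.
have [->|neq_yz] := eqVneq y z.
  rewrite mulVf // prodf_seq_neq0; apply/allP => y' _.
  by apply/implyP; rewrite subr_eq0 eq_sym.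
by rewrite [X in _ * X](big_rem y) //= neq_yz subrr mul0r mulr0.
Qed.

Lemma size_lagrange_poly (rs : seq F) (z : F) : z \in rs ->
  (size (lagrange_poly rs z) <= size rs)%N.
Proof.
move=> zr; apply: leq_trans (size_scale_leq _ _) _.
rewrite -big_filter size_prod_XsubC size_filter -(count_predC (pred1 z)).
have : (0 < count (pred1 z) rs)%N by rewrite -has_count has_pred1.
by case: count => // n _; rewrite addSn ltnS leq_addl.
Qed.

Lemma lagrange_expansion (rs : seq F) (q : {poly F}) :
  uniq rs -> (size q <= size rs)%N ->
  q = \sum_(z <- rs) q.[z] *: lagrange_poly rs z.
Proof.
move=> rs_uniq size_q; apply/eqP; rewrite -subr_eq0; apply/negPn/negP => nz.
have /(max_poly_roots nz)/(_ rs_uniq) :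
    all (root (q - \sum_(z <- rs) q.[z] *: lagrange_poly rs z)) rs.
  apply/allP => y yr; rewrite /root hornerD hornerN horner_sum.
  rewrite (big_rem y) //= hornerZ lagrange_poly_sample // eqxx mulr1.
  rewrite big_seq big1 ?addr0 ?subrr // => z.
  rewrite (mem_rem_uniq _ rs_uniq) => /andP[neq_zy _].
  by rewrite hornerZ lagrange_poly_sample // eq_sym (negbTE neq_zy) mulr0.
apply/negP; rewrite -leqNgt; apply: leq_trans (size_polyD _ _) _.
rewrite geq_max size_q size_polyN /= big_seq.
elim/big_ind: _ => [|p1 p2 le1 le2 | z zr]; first by rewrite size_poly0.
  by apply: leq_trans (size_polyD _ _) _; rewrite geq_max le1.
by apply: leq_trans (size_scale_leq _ _) _; apply: size_lagrange_poly.
Qed.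

End LagrangeInterpolation.

Section IntPolysBoundedOnPoints.
Variable R : realType.

Lemma complex_ge0_le_nat (c : R[i]) : 0 <= c -> exists N : nat, c <= N%:R.
Proof.
case: c => a b; rewrite lecE /= => /andP[/eqP b0 a0].
exists (Num.Def.archi_bound a); rewrite -(rmorph_nat (real_complex R)) lecE /= b0.
by rewrite eqxx ltW // archi_boundP.
Qed.

Lemma coef_bounded_on_points (rs : seq R[i]) (B : R[i] -> R[i]) : uniq rs ->
  exists N : nat, forall g : {poly int}, (size g <= size rs)%N ->
    (forall z, z \in rs -> `|(map_poly intr g).[z]| <= B z) ->
    forall k, `|g`_k| <= N%:Z.
Proof.
move=> rs_uniq.
pose C (k : nat) : R[i] := \sum_(z <- rs) `|B z| * `|(lagrange_poly rs z)`_k|.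
have C_ge0 k : 0 <= C k by apply: sumr_ge0 => z _; rewrite mulr_ge0.
have [N le_CN] : exists N : nat, \sum_(k < size rs) C k <= N%:R.
  by apply: complex_ge0_le_nat; apply: sumr_ge0.
exists N => g size_g g_bounded k.
have [lt_k|le_k] := ltnP k (size rs); last first.
  by rewrite nth_default ?normr0 ?ler0n // (leq_trans size_g).
set q := map_poly (intr : int -> R[i]) g.
have size_q : (size q <= size rs)%N by rewrite size_map_inj_poly //; apply: intr_inj.
have q_k : q`_k = \sum_(z <- rs) q.[z] * (lagrange_poly rs z)`_k.
  rewrite {1}(lagrange_expansion rs_uniq size_q) coef_sum.
  by apply: eq_bigr => z _; rewrite coefZ.
have le_qk_C : `|q`_k| <= C k.
  rewrite q_k; apply: le_trans (ler_norm_sum _ _ _) _.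
  rewrite /C !big_seq; apply: ler_sum => z zr; rewrite normrM ler_wpM2r //.
  have le_qB := g_bounded z zr.
  by rewrite (le_trans le_qB) // real_ler_norm // ger0_real // (le_trans _ le_qB).
rewrite /q coef_map /= in le_qk_C.
rewrite -(ler_int R[i]) intr_norm (le_trans le_qk_C) // (le_trans _ le_CN) //.
by rewrite (bigD1 (Ordinal lt_k)) //= lerDl sumr_ge0.
Qed.

Lemma int_polys_bounded_finite (d N : nat) : exists s : seq {poly int},
  forall g : {poly int}, (size g <= d)%N -> (forall k, `|g`_k| <= N%:Z) -> g \in s.
Proof.
pose poly_of (f : d.-tuple 'I_(N + N).+1) : {poly int} :=
  \poly_(k < d) ((nth ord0 f k : nat)%:Z - N%:Z).
exists [seq poly_of f | f <- enum {: d.-tuple 'I_(N + N).+1}] => g size_g g_bounded.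
have shift k : (absz (g`_k + N%:Z))%:Z - N%:Z = g`_k /\
                (absz (g`_k + N%:Z)%R < (N + N).+1)%N.
  by move: (g_bounded k); rewrite ler_norml => /andP[]; split; lia.
pose f := [tuple (inord (absz (g`_k + N%:Z)) : 'I_(N + N).+1) | k < d].
apply/mapP; exists f; first by rewrite mem_enum.
apply/polyP => k; rewrite coef_poly; case: ltnP => [lt_kd|le_dk].
  by rewrite -[k]/(nat_of_ord (Ordinal lt_kd)) nth_mktuple inordK; case: (shift k).
by rewrite nth_default // (leq_trans size_g).
Qed.

Lemma int_polys_bounded_on_points_finite (rs : seq R[i]) (B : R[i] -> R[i]) :
  uniq rs -> exists s : seq {poly int}, forall g : {poly int}, (size g <= size rs)%N ->
    (forall z, z \in rs -> `|(map_poly intr g).[z]| <= B z) -> g \in s.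
Proof.
move=> /(coef_bounded_on_points B) [N coef_bounded].
have [s s_bounded] := int_polys_bounded_finite (size rs) N.
by exists s => g size_g g_bounded; apply: s_bounded (coef_bounded g size_g g_bounded).
Qed.

End IntPolysBoundedOnPoints.

Lemma irreducible_separable (F : realFieldType) (p : {poly F}) :
  irreducible_poly p -> separable_poly p.
Proof.
move=> [size_p p_irr]; rewrite unlock coprimep_def; apply/negPn/negP => nontriv.
have /eqp_dvdl gcd_p : gcdp p p^`() %= p by apply: p_irr => //; apply: dvdp_gcdl.
have dvd_p' : p %| p^`() by rewrite -gcd_p dvdp_gcdr.
have p'_neq0 : p^`() != 0 by rewrite -size_poly_gt0 size_deriv -subn1 subn_gt0.
move: (dvdp_leq p'_neq0 dvd_p'); rewrite size_deriv.
by case: size size_p => // n _; rewrite ltnn.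
Qed.

Lemma monic_irreducible_int_poly_factor (R : realType) (p : {poly int}) :
  p \is monic -> irreducible_poly (map_poly intr p : {poly rat}) ->
  exists rs : seq R[i], uniq rs /\ map_poly intr p = \prod_(z <- rs) ('X - z%:P).
Proof.
move=> p_monic p_irr.
have [rs p_factor] := closed_field_poly_normal (map_poly (intr : int -> R[i]) p).
rewrite (monicP (monic_map _ p_monic)) scale1r in p_factor.
exists rs; split => //; rewrite -separable_prod_XsubC -p_factor.
have -> : map_poly (intr : int -> R[i]) p = map_poly ratr (map_poly intr p).
  by rewrite -map_poly_comp; apply: eq_map_poly => x /=; rewrite ratr_int.
by rewrite separable_map irreducible_separable.
Qed.

Lemma horner_map_modp_root (K : comNzRingType) (p a : {poly int}) (z : K) :
  p \is monic -> root (map_poly intr p) z ->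
  (map_poly intr (a %% p)).[z] = (map_poly intr a).[z].
Proof.
move=> p_monic /eqP pz0.
rewrite [in RHS](Pdiv.IdomainMonic.divp_eq p_monic a) rmorphD rmorphM /=.
by rewrite hornerD hornerM pz0 mulr0 add0r.
Qed.

Lemma horner_map_int_real (R : realType) (g : {poly int}) (x : R) :
  (map_poly (intr : int -> R[i]) g).[x%:C] = ((map_poly intr g).[x])%:C.
Proof.
rewrite -horner_map -map_poly_comp; congr (_.[_]).
by apply: eq_map_poly => n /=; rewrite rmorph_int.
Qed.

Lemma norm_real_complex (R : realType) (x : R) : `|x%:C| = `|x|%:C.
Proof. by rewrite normc_def /= expr0n addr0 sqrtr_sqr. Qed.

Lemma affine_contraction_bound (F : numFieldType) (z a w c M : F) :
  `|z| < 1 -> 0 <= c -> `|w| <= M ->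
  `|a| <= c + M / (1 - `|z|) -> `|a * z + w| <= c + M / (1 - `|z|).
Proof.
move=> z_lt1 c_ge0 w_le a_le; set b := c + M / (1 - `|z|) in a_le *.
have gap_gt0 : 0 < 1 - `|z| by rewrite subr_gt0.
have -> : b = b * `|z| + M + c * (1 - `|z|) by rewrite /b; field; rewrite gt_eqF.
apply: le_trans (ler_normD _ _) _; rewrite normrM -addrA lerD ?ler_wpM2r //.
by rewrite (le_trans w_le) // lerDl mulr_ge0 // ltW.
Qed.

Definition evalZ {R : realType} (beta : R) (g : {poly int}) : R :=
  (map_poly intr g).[beta].

HB.instance Definition _ (R : realType) (beta : R) :=
  GRing.RMorphism.copy (evalZ beta) (@horner_eval R beta \o map_poly intr).

Section IntPolyRatios.
Variables (R : realType) (beta : R).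

Definition int_poly_ratio (x : R) : Prop :=
  exists a b : {poly int}, evalZ beta b != 0 /\ x = evalZ beta a / evalZ beta b.

Lemma horner_map_rat_int (a : {poly rat}) : exists q : {poly int}, exists2 c : int,
  c != 0 & (map_poly ratr a).[beta] = evalZ beta q / c%:~R.
Proof.
have [q [c c_neq0 ->]] := rat_poly_scale a.
exists q, c => //; rewrite map_polyZ hornerZ -map_poly_comp mulrC fmorphV.
rewrite rmorph_int; congr (_ / _); congr horner.
by apply: eq_map_poly => n /=; rewrite rmorph_int.
Qed.

Lemma inQb_int_poly_ratio (x : R) : inQb beta x -> int_poly_ratio x.
Proof.
move=> [a [b [b_neq0 ->]]].
have [qa [ca ca_neq0 ->]] := horner_map_rat_int a.
have [qb [cb cb_neq0 eq_b]] := horner_map_rat_int b.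
rewrite eq_b in b_neq0 *.
have cR_neq0 (c : int) : c != 0 -> c%:~R != 0 :> R by rewrite intr_eq0.
have qb_neq0 : evalZ beta qb != 0 by move: b_neq0; rewrite mulf_eq0 negb_or => /andP[].
exists (cb%:P * qa), (ca%:P * qb); rewrite !rmorphM /= /evalZ !map_polyC !hornerC /=.
split; first by rewrite mulf_neq0 ?cR_neq0.
by rewrite -!/(evalZ beta _); field; rewrite qb_neq0 !cR_neq0.
Qed.

Lemma int_poly_ratioB (x y : R) :
  int_poly_ratio x -> int_poly_ratio y -> int_poly_ratio (x - y).
Proof.
move=> [a [b [b_neq0 ->]]] [c [d [d_neq0 ->]]].
exists (a * d - c * b), (b * d); rewrite !rmorphB !rmorphM mulf_neq0 //.
by split => //; field; rewrite b_neq0 d_neq0.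
Qed.

Lemma int_poly_ratioM (x y : R) :
  int_poly_ratio x -> int_poly_ratio y -> int_poly_ratio (x * y).
Proof.
move=> [a [b [b_neq0 ->]]] [c [d [d_neq0 ->]]].
exists (a * c), (b * d); rewrite !rmorphM mulf_neq0 //.
by split => //; field; rewrite b_neq0 d_neq0.
Qed.

(* Division by zero returns zero, so no hypothesis on [x] is needed. *)
Lemma int_poly_ratioV (x : R) : int_poly_ratio x -> int_poly_ratio x^-1.
Proof.
move=> [a [b [b_neq0 ->]]]; have [a0|a_neq0] := eqVneq (evalZ beta a) 0.
  by exists 0, 1; rewrite a0 mul0r invr0 !rmorph0 rmorph1 mul0r oner_eq0.
by exists b, a; split => //; rewrite invf_div.
Qed.

Lemma int_poly_ratio_common_denominator (I : finType) (x : I -> R) :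
  (forall i, int_poly_ratio (x i)) ->
  exists2 E : R, E != 0 & exists A : I -> {poly int}, forall i, E * x i = evalZ beta (A i).
Proof.
move=> /fin_all_exists [a /fin_all_exists [b ab]].
have b_neq0 i : evalZ beta (b i) != 0 by case: (ab i).
exists (\prod_i evalZ beta (b i)); first exact/prodf_neq0.
exists (fun i => a i * \prod_(k | k != i) b k) => i.
have [_ ->] := ab i; rewrite rmorphM rmorph_prod (bigD1 i) //=.
by field; rewrite b_neq0.
Qed.

End IntPolyRatios.

Section CentralTiles.
Variables (R : realType) (m : nat).
Implicit Types (h : 'cV[R]_m) (t : tile R m).

Lemma mem_pi_tiles h (s : R) (w : seq 'I_m) t : t \in pi_tiles h s w ->
  exists2 i, (i <= size w)%N & t.2 = s + \sum_(k <- take i w) h k 0.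
Proof.
elim: w s => [|j w IH] s //=; rewrite in_cons => /orP[/eqP -> | /IH [i le_iw ->]].
  by exists 0%N; rewrite ?take0 ?big_nil ?addr0.
by exists i.+1; rewrite //= big_cons addrA.
Qed.

Lemma Sbar_cases (sigma : 'I_m -> seq 'I_m) (beta : R) h t :
  Sbar sigma beta h t = t \/
  central h (Sbar sigma beta h t) /\ exists2 i, (i <= size (sigma t.1))%N &
    (Sbar sigma beta h t).2 = beta * t.2 + \sum_(k <- take i (sigma t.1)) h k 0.
Proof.
rewrite /Sbar; set ts := subst_tile sigma beta h t.
have [has0|no0] := boolP (has (contains0 h) ts); last first.
  by left; rewrite nth_default // leqNgt -has_find.
right; split; first exact: nth_find.
by apply: mem_pi_tiles; apply: mem_nth; rewrite -has_find.
Qed.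

Lemma central_left_abs_le h t : (forall j, 0 <= h j 0) -> central h t ->
  `|t.2| <= \sum_j h j 0.
Proof.
move=> h_ge0 /andP[]; rewrite /tile_left /tile_right => t_le0 t_gt0.
have : h t.1 0 <= \sum_j h j 0 by rewrite (bigD1 t.1) //= lerDl sumr_ge0.
by rewrite ler0_norm //; lra.
Qed.

End CentralTiles.

Section PisotOrbit.
Variables (R : realType) (m : nat) (sigma : 'I_m -> seq 'I_m) (beta : R).
Variable h : 'cV[R]_m.
Hypothesis h_gt0 : forall j, 0 < h j 0.
Variables (p : {poly int}) (rs : seq R[i]).
Hypotheses (p_monic : p \is monic) (rs_uniq : uniq rs).
Hypothesis p_factor : map_poly intr p = \prod_(z <- rs) ('X - z%:P).
Hypothesis beta_root : root (map_poly intr p) beta.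
Hypothesis conj_lt1 :
  forall z, root (map_poly intr p) z -> z != beta%:C -> `|z| < 1.
Variables (E : R) (A : 'I_m -> {poly int}).
Hypotheses (E_neq0 : E != 0) (EA : forall j, E * h j 0 = evalZ beta (A j)).

Local Notation Sb := (Sbar sigma beta h).
Local Notation evalC g z := ((map_poly (intr : int -> R[i]) g).[z]).

Lemma size_p_roots : size p = (size rs).+1.
Proof.
rewrite -(size_prod_XsubC rs id) -p_factor size_map_inj_poly //; exact: intr_inj.
Qed.

Lemma root_p_roots z : z \in rs -> root (map_poly intr p) z.
Proof. by rewrite p_factor root_prod_XsubC. Qed.

Definition digits : seq {poly int} :=
  [seq \sum_(k <- take i (sigma j)) A k
     | j <- enum 'I_m, i <- iota 0 (\max_(j < m) size (sigma j)).+1].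

Lemma Sbar_digit t g : E * t.2 = evalZ beta g ->
  Sb t = t \/ central h (Sb t) /\
  exists2 w, w \in digits & E * (Sb t).2 = evalZ beta (g * 'X + w).
Proof.
move=> Eg; have [->|[central_Sb [i le_i ->]]] := Sbar_cases sigma beta h t.
  by left.
right; split => //; exists (\sum_(k <- take i (sigma t.1)) A k).
  apply: (allpairs_f (fun j i => \sum_(k <- take i (sigma j)) A k)).
    by rewrite mem_enum.
  rewrite mem_iota add0n ltnS (leq_trans le_i) //.
  exact: (leq_bigmax (F := fun j => size (sigma j))).
have evalZX : evalZ beta 'X = beta by rewrite /evalZ map_polyX hornerX.
rewrite rmorphD rmorphM rmorph_sum /= evalZX mulrDr mulr_sumr mulrCA Eg mulrC.
by congr (_ + _); apply: eq_bigr => k _; apply: EA.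
Qed.

(* At [beta] the bound comes from centrality; at another conjugate z it is preserved
   by a |-> a z + w for every digit w, because |z| < 1. *)
Definition conj_bound (g0 : {poly int}) (z : R[i]) : R[i] :=
  if z == beta%:C then (`|E| * \sum_j h j 0)%:C
  else `|evalC g0 z| + (\sum_(w <- digits) `|evalC w z|) / (1 - `|z|).

Definition bounded_representable (g0 : {poly int}) (t : tile R m) : Prop :=
  central h t /\ exists g : {poly int}, [/\ (size g <= size rs)%N,
    E * t.2 = evalZ beta g & forall z, z \in rs -> `|evalC g z| <= conj_bound g0 z].

Lemma conj_bound_beta g0 t g : central h t -> E * t.2 = evalZ beta g ->
  `|evalC g beta%:C| <= conj_bound g0 beta%:C.
Proof.
move=> central_t Eg; rewrite /conj_bound eqxx horner_map_int_real -/(evalZ beta g).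
rewrite -Eg norm_real_complex lecR normrM ler_wpM2l // central_left_abs_le //.
by move=> j; apply: ltW.
Qed.

Lemma size_modp_roots (g : {poly int}) : (size (g %% p)%R <= size rs)%N.
Proof. by rewrite -ltnS -size_p_roots ltn_modp monic_neq0. Qed.

Lemma evalZ_modp (g : {poly int}) : evalZ beta (g %% p) = evalZ beta g.
Proof. exact: horner_map_modp_root. Qed.

Lemma bounded_representable_init g0 t : central h t ->
  E * t.2 = evalZ beta g0 -> bounded_representable g0 t.
Proof.
move=> central_t Eg0; split => //; exists (g0 %% p); split.
- exact: size_modp_roots.
- by rewrite evalZ_modp.
move=> z zr; have [->|neq_z] := eqVneq z beta%:C.
  by apply: (conj_bound_beta _ central_t); rewrite evalZ_modp.
rewrite /conj_bound (negbTE neq_z) horner_map_modp_root ?root_p_roots // lerDl.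
by rewrite divr_ge0 ?sumr_ge0 // subr_ge0 ltW ?conj_lt1 ?root_p_roots.
Qed.

Lemma bounded_representable_Sbar g0 t :
  bounded_representable g0 t -> bounded_representable g0 (Sb t).
Proof.
move=> [central_t [g [size_g Eg g_bounded]]].
have [->|[central_Sb [w w_digit Ew]]] := Sbar_digit Eg.
  by split => //; exists g.
split => //; exists ((g * 'X + w) %% p); split.
- exact: size_modp_roots.
- by rewrite evalZ_modp.
move=> z zr; have [->|neq_z] := eqVneq z beta%:C.
  by apply: (conj_bound_beta _ central_Sb); rewrite evalZ_modp.
have := g_bounded z zr; rewrite /conj_bound (negbTE neq_z) => le_g.
rewrite horner_map_modp_root ?root_p_roots // rmorphD rmorphM /= map_polyX.
rewrite hornerD hornerMX.
apply: affine_contraction_bound => //; first by rewrite conj_lt1 ?root_p_roots.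
by rewrite (big_rem w) //= lerDl sumr_ge0.
Qed.

Lemma bounded_representable_finite g0 : exists s : seq (tile R m),
  forall t, bounded_representable g0 t -> t \in s.
Proof.
have [gs gs_bounded] := int_polys_bounded_on_points_finite (conj_bound g0) rs_uniq.
exists [seq (j, evalZ beta g / E) | j <- enum 'I_m, g <- gs].
move=> [j s] [_ [g [size_g Eg g_bounded]]].
have -> : s = evalZ beta g / E by rewrite -Eg [E * _]mulrC mulfK.
apply: (allpairs_f (fun j g => (j, evalZ beta g / E))); first by rewrite mem_enum.
exact: gs_bounded.
Qed.

Lemma Sbar_eventually_periodic t g0 : central h t -> E * t.2 = evalZ beta g0 ->
  exists K L : nat, (0 < L)%N /\ forall N, iter (N * L + K) Sb t = iter K Sb t.
Proof.
move=> central_t Eg0; have [s s_bounded] := bounded_representable_finite g0.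
apply: (iter_eventually_periodic (s := s)) => n; apply: s_bounded.
elim: n => [|n IH]; first exact: bounded_representable_init.
exact: bounded_representable_Sbar.
Qed.

End PisotOrbit.

Theorem mainTheorem3 (R : realType) (m : nat) (sigma : 'I_m -> seq 'I_m)
  (beta : R) (h : 'cV[R]_m) (T : tile R m) :
  tiling_subst sigma beta h ->
  (exists r : R, 0 < r /\ forall j : 'I_m, inQb beta (h j 0 / r)) ->
  pisot beta ->
  central h T ->
  inQb beta (tile_left T) -> inQb beta (tile_right h T) ->
  exists K L : nat, (0 < L)%N /\
    forall N : nat, (0 < N)%N ->
      iter (N * L + K) (Sbar sigma beta h) T = iter K (Sbar sigma beta h) T.
Proof.
move=> [_ [_ [_ h_gt0]]] [r [r_gt0 hr]] [_ [p [[p_monic [beta_root p_irr]] conj_lt1]]].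
move=> central_T /inQb_int_poly_ratio left_T /inQb_int_poly_ratio right_T.
have [rs [rs_uniq p_factor]] := monic_irreducible_int_poly_factor R p_monic p_irr.
have hT_ratio : int_poly_ratio beta (h T.1 0).
  by have := int_poly_ratioB right_T left_T; rewrite /tile_right /tile_left addrC addKr.
have h_ratio j : int_poly_ratio beta (h j 0).
  have -> : h j 0 = h j 0 / r * (h T.1 0 / (h T.1 0 / r)) by field; rewrite !gt_eqF.
  apply: int_poly_ratioM; first exact: inQb_int_poly_ratio.
  by apply: int_poly_ratioM hT_ratio _; apply/int_poly_ratioV/inQb_int_poly_ratio.
pose x (o : option 'I_m) := if o is Some j then h j 0 else T.2.
have [E E_neq0 [A EA]] : exists2 E : R, E != 0 &
    exists A : option 'I_m -> {poly int}, forall o, E * x o = evalZ beta (A o).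
  by apply: int_poly_ratio_common_denominator => -[j|] //; apply: h_ratio.
have [K [L [L_gt0 periodic]]] := Sbar_eventually_periodic sigma h_gt0 p_monic
  rs_uniq p_factor beta_root conj_lt1 E_neq0 (fun j => EA (Some j)) central_T (EA None).
by exists K, L; split => // N _.
Qed.
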